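(* For integers $n\geq 3$, $m\geq 1$ and $p\geq 2$, $$\chi_\rho(FSSD_m(C_n\star P_p)) \leq \begin{cases} 6, & n=3,\\ 7, & n\geq 4,\ n\notin\{5,7,11\},\\ 8, & n\in\{5,7,11\}.\end{cases}$$
   Context: All graphs are finite and simple. For a positive integer $i$, an $i$-packing in a graph is a set of vertices any two distinct members of which are at distance greater than $i$. The packing chromatic number $\chi_\rho(H)$ is the smallest $k$ such that $V(H)$ can be partitioned into sets $V_1,\dots,V_k$ with each $V_i$ an $i$-packing. For a positive integer $m$, $FSSD_m(G)$ is obtained from $G$ by replacing each edge $xy$ by a copy of $K_{2,m}$: the edge $xy$ is deleted and $m$ new vertices are added, each adjacent to exactly $x$ and $y$. The neighborhood corona $G\star H$ of graphs $G$ (with vertices $w_1,\dots,w_{n}$) and $H$ consists of one copy of $G$ and $n$ copies $H_1,\dots,H_n$ of $H$ (each retaining the edges of $H$), where every vertex of $H_i$ is additionally joined to every neighbor of $w_i$ in $G$. $C_n$ is the cycle and $P_p$ the path on $p$ vertices. *)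

From mathcomp Require Import all_boot.
Set Implicit Arguments. Unset Strict Implicit. Unset Printing Implicit Defensive.

(* A finite graph: a finite vertex type with an adjacency relation.
   All constructions below produce symmetric irreflexive relations. *)
Record graph := Graph { gV : finType; gE : rel gV }.

Section Dist.
Variable G : graph.

Fixpoint ball (d : nat) (x : gV G) : {set gV G} :=
  match d with
  | 0 => [set x]
  | d'.+1 => ball d' x :|: [set z | [exists w in ball d' x, gE w z]]
  end.

Definition dist_gt (i : nat) (x y : gV G) : bool := y \notin ball i x.

Definition packing (i : nat) (S : {set gV G}) : bool :=
  [forall x in S, forall y in S, (x != y) ==> dist_gt i x y].

(* V(G) partitions into V_1,...,V_k with V_i an i-packing
   (classes indexed by j : 'I_k represent V_(j+1); empty classes allowed) *)
Definition packing_colorable (k : nat) : bool :=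
  [exists f : {ffun gV G -> 'I_k},
     [forall j : 'I_k, packing j.+1 [set x | f x == j]]].

Lemma packing_colorable_card : packing_colorable #|gV G|.
Proof.
apply/existsP; exists [ffun x => enum_rank x].
apply/forallP => j; apply/forallP => x; apply/implyP; rewrite inE ffunE => /eqP Hx.
apply/forallP => y; apply/implyP; rewrite inE ffunE => /eqP Hy.
apply/implyP => Hxy; exfalso; move/negP: Hxy; apply.
by apply/eqP; apply: enum_rank_inj; rewrite Hx Hy.
Qed.

Lemma packing_colorable_ex : exists k, packing_colorable k.
Proof. by exists #|gV G|; exact: packing_colorable_card. Qed.

Definition chi_rho : nat := ex_minn packing_colorable_ex.

End Dist.

Definition cycle_graph (n : nat) : graph :=
  @Graph 'I_n (fun i j => (j == (i.+1 %% n) :> nat) || (i == (j.+1 %% n) :> nat)).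

Definition path_graph (p : nat) : graph :=
  @Graph 'I_p (fun i j => (i.+1 == j :> nat) || (j.+1 == i :> nat)).

(* neighborhood corona G * H: a copy of G plus copies H_w (w in V(G)) of H,
   each vertex of H_w joined to every neighbour of w in G *)
Definition ncorona_adj (G H : graph) (u v : gV G + (gV G * gV H)) : bool :=
  match u, v with
  | inl a, inl b => gE a b
  | inr (w, x), inr (w', x') => (w == w') && gE x x'
  | inl a, inr (w, _) => gE w a
  | inr (w, _), inl a => gE w a
  end.

Definition ncorona (G H : graph) : graph :=
  @Graph (gV G + (gV G * gV H))%type (@ncorona_adj G H).

(* FSSD_m(G): each edge xy replaced by K_{2,m}. Edges of G are represented
   by ordered pairs (x,y) with gE x y and enum_rank x < enum_rank y (one per
   unordered edge); the new vertices are (x,y,k) with k < m. *)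
Definition fssd_new (G : graph) (m : nat) :=
  {s : (gV G * gV G * 'I_m)%type |
     gE s.1.1 s.1.2 && (enum_rank s.1.1 < enum_rank s.1.2)}.

Definition fssd_adj (G : graph) (m : nat) (u v : gV G + fssd_new G m) : bool :=
  match u, v with
  | inl a, inr s => (a == (val s).1.1) || (a == (val s).1.2)
  | inr s, inl a => (a == (val s).1.1) || (a == (val s).1.2)
  | _, _ => false
  end.

Definition FSSD (m : nat) (G : graph) : graph :=
  @Graph (gV G + fssd_new G m)%type (@fssd_adj G m).

Definition theorem2_bound (n : nat) : nat :=
  if n == 3 then 6 else if n \in [:: 5; 7; 11] then 8 else 7.

From mathcomp Require Import all_boot zify.
Set Implicit Arguments. Unset Strict Implicit. Unset Printing Implicit Defensive.

(* Colour the subdivision vertices 1, the vertices of each copy of P_p alternately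
   2 and 3, and the cycle C_n with colours 4, ..., theorem2_bound n.  Two subdivision
   vertices are at distance 2, and subdividing doubles all distances between
   original vertices, so it suffices that equally coloured vertices v of the corona
   lie at distance greater than c(v)/2 there.  Projecting the corona onto C_n does not
   increase distances, which reduces the problem to a colouring of Z_n in which equal
   colours c are more than c/2 apart: the periodic word 4567...4567 followed by a
   short tail depending on n mod 4, with special words for n = 3, 5, 7, 11. *)

Section Balls.
Variable G : graph.
Implicit Types (x w z : gV G) (d : nat).

Lemma ballSP x z d :
  reflect (z \in ball d x \/ exists2 w, w \in ball d x & gE w z) (z \in ball d.+1 x).
Proof.
rewrite /= !inE; apply: (iffP orP) => -[-> | H]; [by left | | by left |].
  by right; case/existsP: H => w /andP [Hw Hwz]; exists w.
by right; case: H => w Hw Hwz; apply/existsP; exists w; rewrite Hw.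
Qed.

Lemma ball_monotone x z d d' : z \in ball d x -> d <= d' -> z \in ball d' x.
Proof.
move=> Hz /subnK <-; elim: (d' - d) => [|k IH] //.
by apply/ballSP; left.
Qed.

Lemma ballS_edge x w z d : w \in ball d x -> gE w z -> z \in ball d.+1 x.
Proof. by move=> Hw Hwz; apply/ballSP; right; exists w. Qed.

End Balls.

Lemma ball_hom (G H : graph) (f : gV G -> gV H) :
  (forall u v, gE u v -> (f u == f v) || gE (f u) (f v)) ->
  forall d x z, z \in ball d x -> f z \in ball d (f x).
Proof.
move=> f_edge; elim=> [|d IH] x z.
  by rewrite !inE => /eqP ->.
case/ballSP=> [/IH Hz | [w /IH Hw /f_edge]].
  by apply/ballSP; left.
by case/orP=> [/eqP <- | ]; [apply/ballSP; left | exact: ballS_edge].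
Qed.

Definition packing_coloring (G : graph) (c : gV G -> nat) : Prop :=
  forall x y, x != y -> c x = c y -> dist_gt (c x) x y.

Lemma packing_colorable_of (G : graph) (c : gV G -> nat) k :
  packing_coloring c -> (forall v, 0 < c v <= k) -> packing_colorable G k.
Proof.
move=> c_packing c_range.
have lt_k v : (c v).-1 < k by have := c_range v; lia.
apply/existsP; exists [ffun v => Ordinal (lt_k v)]; apply/forallP => j.
have class_col v : v \in [set x | [ffun v => Ordinal (lt_k v)] x == j] -> c v = j.+1.
  by rewrite inE ffunE => /eqP/(congr1 val)/= <-; have := c_range v; lia.
apply/forallP => x; apply/implyP => /class_col Hx.
apply/forallP => y; apply/implyP => /class_col Hy.
by apply/implyP => Hxy; rewrite -Hx; apply: c_packing; rewrite ?Hx ?Hy.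
Qed.

Lemma chi_rho_le (G : graph) k : packing_colorable G k -> chi_rho G <= k.
Proof. by rewrite /chi_rho; case: ex_minnP => k' _; apply. Qed.

Definition half_packing_coloring (G : graph) (c : gV G -> nat) : Prop :=
  forall x y, x != y -> c x = c y -> dist_gt (c x)./2 x y.

Section Subdivision.
Variables (G : graph) (m : nat).
Hypothesis E_sym : symmetric (@gE G).
Local Notation S := (FSSD m G).

Lemma FSSD_ball_halves (a : gV G) k (z : gV S) : z \in ball k (inl a : gV S) ->
  match z with
  | inl b => b \in ball k./2 a
  | inr s => ((val s).1.1 \in ball k.+1./2 a) && ((val s).1.2 \in ball k.+1./2 a)
  end.
Proof.
elim: k z => [|k IH] z.
  by rewrite inE => /eqP ->; rewrite inE.
case/ballSP=> [/IH | [w /IH Hw]]; case: z => [b | s].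
- by move=> Hb; apply: ball_monotone Hb _; lia.
- by case/andP=> /ball_monotone H1 /ball_monotone H2; rewrite H1 ?H2 //; lia.
- by case: w Hw => [b' | s'] // /andP [H1 H2] /orP [] /eqP -> //.
- case: w Hw => [b | //] Hb Hbs.
  have /andP [Hs _] := valP s.
  have Hb' : b \in ball (k./2).+1 a by apply: ball_monotone Hb _.
  have -> : k.+2./2 = (k./2).+1 by [].
  case/orP: Hbs => /eqP Eb; subst b; apply/andP; split => //.
  + exact: ballS_edge Hb Hs.
  + by apply: (ballS_edge Hb); rewrite E_sym.
Qed.

Lemma FSSD_ball_inl (a b : gV G) k :
  (inl b : gV S) \in ball k (inl a : gV S) -> b \in ball k./2 a.
Proof. exact: FSSD_ball_halves. Qed.

Definition FSSD_coloring (c : gV G -> nat) (v : gV S) : nat :=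
  if v is inl a then c a else 1.

Lemma FSSD_packing_coloring (c : gV G -> nat) :
  (forall a, 1 < c a) -> half_packing_coloring c ->
  packing_coloring (FSSD_coloring c).
Proof.
move=> c_gt1 c_half [a | s] [b | t] //= Hne Hc; last first.
- apply/negP => /ballSP [|[w]]; rewrite inE => /eqP.
    by move=> [Ets]; rewrite Ets eqxx in Hne.
  by move=> ->.
- by have := c_gt1 b; rewrite -Hc.
- by have := c_gt1 a; rewrite Hc.
apply/negP => /FSSD_ball_inl Hb.
have Hab : a != b by apply: contra Hne => /eqP ->.
by move/negP: (c_half a b Hab Hc).
Qed.

End Subdivision.

Lemma cycle_sym n : symmetric (@gE (cycle_graph n)).
Proof. by move=> i j /=; rewrite orbC. Qed.

Lemma path_sym p : symmetric (@gE (path_graph p)).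
Proof. by move=> x y /=; rewrite orbC. Qed.

Lemma path_edge_odd p (x y : gV (path_graph p)) : gE x y -> odd y = ~~ odd x.
Proof. by case/orP => /eqP <- /=; rewrite ?negbK. Qed.

Lemma ncorona_sym (G H : graph) :
  symmetric (@gE G) -> symmetric (@gE H) -> symmetric (@gE (ncorona G H)).
Proof.
move=> G_sym H_sym [a | [w x]] [b | [w' x']] //=.
by rewrite /ncorona_adj /= eq_sym H_sym.
Qed.

Definition corona_base (G H : graph) (v : gV (ncorona G H)) : gV G :=
  match v with inl a => a | inr (w, _) => w end.

Lemma corona_base_edge (G H : graph) : symmetric (@gE G) ->
  forall u v : gV (ncorona G H),
  gE u v -> (corona_base u == corona_base v) || gE (corona_base u) (corona_base v).
Proof.
move=> G_sym [a | [w x]] [b | [w' x']] //= Huv; rewrite ?Huv ?orbT //.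
- by rewrite G_sym Huv orbT.
- by case/andP: Huv => ->.
Qed.

Lemma cycle_ball n (i j : gV (cycle_graph n)) r : j \in ball r i ->
  exists a b, a + b <= r /\ j + a = i + b %[mod n].
Proof.
elim: r j => [|r IH] j.
  by rewrite inE => /eqP ->; exists 0, 0.
case/ballSP=> [/IH [a [b [Hab Hj]]] | [w /IH [a [b [Hab Hw]]]]].
  by exists a, b; split=> //; lia.
case/orP=> /eqP Ej.
- exists a, b.+1; split; first lia.
  rewrite Ej modnDml (_ : w.+1 + a = w + a + 1); last lia.
  by rewrite -modnDml Hw modnDml addn1 addnS.
- exists a.+1, b; split; first lia.
  by rewrite -addSnnS -modnDml -Ej.
Qed.

Definition cyclic_spread (n : nat) (c : nat -> nat) : bool :=
  all (fun i => all (fun d => ((i + d) %% n != i) ==> (c ((i + d) %% n) != c i))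
                    (iota 1 (c i)./2))
      (iota 0 n).

Lemma cyclic_spreadP n c i d : cyclic_spread n c -> i < n -> 0 < d <= (c i)./2 ->
  (i + d) %% n != i -> c ((i + d) %% n) != c i.
Proof.
move=> /allP c_spread lt_in Hd.
have i_in : i \in iota 0 n by rewrite mem_iota.
have d_in : d \in iota 1 (c i)./2 by rewrite mem_iota; lia.
exact: implyP (allP (c_spread i i_in) d d_in).
Qed.

Lemma cycle_half_packing n c : cyclic_spread n c ->
  half_packing_coloring (fun i : gV (cycle_graph n) => c i).
Proof.
move=> c_spread i j Hij Hc; apply/negP => /cycle_ball [a [b [Hab Hj]]].
wlog le_ab : i j a b Hij Hc Hab Hj / a <= b.
  move=> Hwlog; case: (leqP a b) => [le_ab | /ltnW le_ba]; first exact: (Hwlog i j a b).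
  apply: (Hwlog j i b a) le_ba;
    by [rewrite eq_sym | rewrite Hc | rewrite addnC -Hc | rewrite Hj].
have mod_ord (k : gV (cycle_graph n)) : k %% n = k by rewrite modn_small.
have Hj_d : j = (i + (b - a)) %% n :> nat.
  rewrite -(mod_ord j); apply/eqP.
  by rewrite -(eqn_modDr a) -addnA subnK // Hj.
have d_gt0 : 0 < b - a.
  rewrite subn_gt0 ltnNge; apply: contra Hij => le_ba.
  by apply/eqP/val_inj; rewrite /= Hj_d (_ : b - a = 0) ?addn0 ?mod_ord //; lia.
have d_le : 0 < b - a <= (c i)./2 by lia.
have : c ((i + (b - a)) %% n) != c i.
  by apply: cyclic_spreadP c_spread (ltn_ord i) d_le _; rewrite -Hj_d eq_sym.
by rewrite -Hj_d Hc eqxx.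
Qed.

Definition corona_coloring n p (c : nat -> nat)
    (v : gV (ncorona (cycle_graph n) (path_graph p))) : nat :=
  match v with inl i => c i | inr (_, x) => 2 + odd x end.

Lemma corona_half_packing n p c : cyclic_spread n c -> (forall i, i < n -> 3 < c i) ->
  half_packing_coloring (@corona_coloring n p c).
Proof.
move=> c_spread c_gt3 [i | [w x]] [j | [w' x']] Hne Hc.
- apply/negP => /(ball_hom (corona_base_edge (@cycle_sym n))) /= Hj.
  have Hij : i != j by apply: contra Hne => /eqP ->.
  by move/negP: (cycle_half_packing c_spread Hij Hc).
- by move: Hc (c_gt3 i (ltn_ord i)) => /= ->; case: (odd x').
- by move: Hc (c_gt3 j (ltn_ord j)) => /= <-; case: (odd x).
rewrite /dist_gt (_ : _./2 = 1); last by rewrite /=; case: (odd x).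
apply/negP => /ballSP [|[u]]; rewrite inE => /eqP.
  by move=> Ew; rewrite Ew eqxx in Hne.
by move=> -> /andP [_ /path_edge_odd Hodd]; move: Hc; rewrite /= Hodd; case: (odd x).
Qed.

Definition word_coloring (W : seq nat) (n i : nat) : nat :=
  if i < n - size W then 4 + i %% 4 else nth 0 W (i - (n - size W)).

(* Only colour clashes starting in the last period 4567 followed by W need checking:
   past the end of the word the cycle wraps around to 4567 again. *)
Definition tail_spread (W : seq nat) : bool :=
  let C := [:: 4; 5; 6; 7] ++ W in
  all (fun t => all (fun d => nth 0 C t !=
                      (if t + d < size C then nth 0 C (t + d) else 4 + (t + d - size C)))
                    (iota 1 (nth 0 C t)./2))
      (iota 0 (size C)).

Section WordColoring.
Variables (W : seq nat) (n q : nat).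
Hypothesis W_range : all (fun c => 3 < c <= 7) W.
Hypothesis n_split : n - size W = 4 * q + 4.

Lemma word_coloring_last_block u : u < 4 + size W ->
  word_coloring W n (4 * q + u) = nth 0 ([:: 4; 5; 6; 7] ++ W) u.
Proof.
move=> lt_u; rewrite /word_coloring n_split nth_cat /=.
case: (ltnP u 4) => [lt_u4 | le_4u].
  rewrite ifT; last lia.
  have -> : (4 * q + u) %% 4 = u by lia.
  by case: u {lt_u} lt_u4 => [|[|[|[|]]]].
rewrite ifF; last lia.
by congr nth; lia.
Qed.

Lemma word_coloring_range i : i < n -> 3 < word_coloring W n i <= 7.
Proof.
move=> lt_in; rewrite /word_coloring; case: ifP => [_ | /negbT]; first lia.
rewrite -leqNgt => le_i.
have lt_idx : i - (n - size W) < size W by lia.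
exact: allP W_range _ (mem_nth 0 lt_idx).
Qed.

Lemma word_coloring_spread : tail_spread W -> cyclic_spread n (word_coloring W n).
Proof.
move=> W_spread; apply/allP => i; rewrite mem_iota => /andP [_ lt_in].
apply/allP => d; rewrite mem_iota => /andP [d_gt0 d_lt]; apply/implyP => _.
have d_le3 : d <= 3 by have := word_coloring_range lt_in; lia.
case: (ltnP i (4 * q)) => [lt_i4q | le_4qi].
  rewrite modn_small; last lia.
  by rewrite /word_coloring n_split !ifT; lia.
set t := i - 4 * q; have Ei : i = 4 * q + t by lia.
have lt_t : t < 4 + size W by lia.
have col_i : word_coloring W n i = nth 0 ([:: 4; 5; 6; 7] ++ W) t.
  by rewrite Ei word_coloring_last_block.
have t_in : t \in iota 0 (size ([:: 4; 5; 6; 7] ++ W)) by rewrite mem_iota size_cat.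
have d_in : d \in iota 1 (nth 0 ([:: 4; 5; 6; 7] ++ W) t)./2.
  by rewrite mem_iota -col_i; lia.
move: (allP (allP W_spread t t_in) d d_in).
have sizeC : size ([:: 4; 5; 6; 7] ++ W) = 4 + size W by rewrite size_cat.
rewrite -col_i eq_sym sizeC; case: ifP => [lt_td | /negbT ge_td].
- rewrite (_ : (i + d) %% n = 4 * q + (t + d)); first by rewrite word_coloring_last_block.
  by rewrite modn_small; lia.
- have -> : i + d = (t + d - (4 + size W)) + n by lia.
  rewrite modnDr modn_small; last lia.
  by rewrite [word_coloring W n (_ - _)]/word_coloring ifT ?modn_small //; lia.
Qed.

End WordColoring.

Definition tail_word (r : nat) : seq nat :=
  nth [::] [:: [::]; [:: 4; 5; 6; 4; 7; 5; 4; 6; 7]; [:: 4; 5; 6; 4; 5; 7];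
               [:: 4; 5; 6; 4; 5; 7; 4; 5; 6; 4; 7; 5; 4; 6; 7]] r.

Lemma tail_word_spec r : r < 4 ->
  [/\ size (tail_word r) %% 4 = r, size (tail_word r) < 16, tail_spread (tail_word r)
    & all (fun c => 3 < c <= 7) (tail_word r)].
Proof. by case: r => [|[|[|[|]]]]. Qed.

Definition cycle_word (n : nat) : seq nat :=
  if n == 3 then [:: 4; 5; 6]
  else if n == 5 then [:: 4; 5; 6; 7; 8]
  else if n == 7 then [:: 4; 5; 6; 4; 5; 7; 8]
  else if n == 11 then [:: 4; 5; 6; 4; 5; 7; 4; 5; 6; 7; 8]
  else tail_word (n %% 4).

Definition cycle_coloring (n : nat) : nat -> nat := word_coloring (cycle_word n) n.

Definition cycle_coloring_ok (n : nat) : bool :=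
  cyclic_spread n (cycle_coloring n) &&
  all (fun i => 3 < cycle_coloring n i <= theorem2_bound n) (iota 0 n).

(* For n < 20 the periodic part may be empty (n = 6, 9, 15) or n is exceptional. *)
Lemma cycle_coloring_ok_small : all cycle_coloring_ok (iota 3 17).
Proof. by []. Qed.

Lemma cycle_coloring_ok_large n : 20 <= n -> cycle_coloring_ok n.
Proof.
move=> n_ge20.
have bound7 : theorem2_bound n = 7.
  by rewrite /theorem2_bound !inE; do !case: eqP => [?|_]; try lia.
have word_n : cycle_word n = tail_word (n %% 4).
  by rewrite /cycle_word; do !case: eqP => [?|_]; try lia.
have [size_mod4 size_lt W_spread W_range] := tail_word_spec (ltn_pmod n (isT : 0 < 4)).
have [q n_split] : exists q, n - size (tail_word (n %% 4)) = 4 * q + 4.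
  by exists ((n - size (tail_word (n %% 4))) %/ 4).-1; lia.
apply/andP; split; rewrite /cycle_coloring word_n.
  exact: word_coloring_spread W_range n_split W_spread.
rewrite bound7; apply/allP => i; rewrite mem_iota add0n => /andP [_ lt_in].
by have := word_coloring_range W_range n_split lt_in.
Qed.

Lemma cycle_coloring_spec n : 3 <= n ->
  cyclic_spread n (cycle_coloring n) /\
  (forall i, i < n -> 3 < cycle_coloring n i <= theorem2_bound n).
Proof.
move=> n_ge3; have /andP [c_spread c_range] : cycle_coloring_ok n.
  case: (ltnP n 20) => [lt_n20 | ]; last exact: cycle_coloring_ok_large.
  by apply: (allP cycle_coloring_ok_small); rewrite mem_iota; lia.
split=> // i lt_in; apply: (allP c_range); rewrite mem_iota; lia.
Qed.

Theorem theorem2 (n m p : nat) :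
  3 <= n -> 1 <= m -> 2 <= p ->
  chi_rho (FSSD m (ncorona (cycle_graph n) (path_graph p))) <= theorem2_bound n.
Proof.
(* The bound holds for every m and p. *)
move=> n_ge3 _ _.
have [c_spread c_range] := cycle_coloring_spec n_ge3.
have bound_ge3 : 3 <= theorem2_bound n.
  by rewrite /theorem2_bound; case: ifP => _ //; case: ifP.
set c0 := @corona_coloring n p (cycle_coloring n).
have c0_range v : 1 < c0 v <= theorem2_bound n.
  case: v => [i | [w x]] /=; first by have := c_range i (ltn_ord i); lia.
  by case: (odd x); lia.
apply: chi_rho_le (packing_colorable_of (c := FSSD_coloring (m := m) c0) _ _).
- apply: FSSD_packing_coloring.
  + exact: ncorona_sym (@cycle_sym n) (@path_sym p).
  + by move=> v; case/andP: (c0_range v).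
  + apply: corona_half_packing c_spread _ => i lt_in.
    by case/andP: (c_range i lt_in).
- case=> [v | s] /=; last lia.
  by have := c0_range v; lia.
Qed.
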